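(* Let $n,w,d\ge1$, $N=2^n$, and let $\mathbb{F}$ be a field containing an element of multiplicative order at least $(Ndw^2)^2$ and at least $w^2$ distinct elements. In the space of multilinear polynomials in $x_1,\ldots,x_n$, the set of (multilinear) polynomials computed by width-$w^2$, length-$n$ roABPs is a succinct hitting set for the class of $N$-variate polynomials of individual degree at most $d$ computed by width-$w$, length-$N$ roABPs that read their variables in a monomial-compatible ordering; that is, for every non-zero such $F\in\mathbb{F}[X_1,\ldots,X_N]$ there is a multilinear $f\in\mathbb{F}[x_1,\ldots,x_n]$ computed by a width-$w^2$ roABP of length $n$ such that $F(\mathrm{coeff}(f))\ne0$.
   Context: A read-once oblivious algebraic branching program (roABP) of width $w$ and length $L$ in variables $X_1,\ldots,X_L$ and variable order $\sigma$ computes $\big(\prod_{i=1}^L M_i(X_{\sigma(i)})\big)_{1,1}$ where each $M_i$ is a $w\times w$ matrix whose entries are univariate polynomials in $X_{\sigma(i)}$. For multilinear $f\in\mathbb{F}[x_1,\ldots,x_n]$, $\mathrm{coeff}(f)\in\mathbb{F}^{2^n}$ is its vector of coefficients in the multilinear monomial basis, and multilinear monomials are identified with indices in $[N]$ via binary representation (so $\mathrm{coeff}(f)$ is plugged in for $X_1,\ldots,X_N$). A monomial-compatible ordering of $X_1,\ldots,X_N$ is an ordering obtained from some permutation $\sigma$ of $[n]$ by ordering the multilinear monomials in $x_1,\ldots,x_n$ lexicographically with respect to the variable order $\sigma$ and transporting this order to $[N]$ via the canonical identification of multilinear monomials with indices; there are $n!$ such orderings. *)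

From HB Require Import structures.
From mathcomp Require Import all_boot all_order all_algebra all_fingroup.
From mathcomp Require Import mpoly.
Set Implicit Arguments. Unset Strict Implicit. Unset Printing Implicit Defensive.
Import GRing.Theory.
Local Open Scope ring_scope.

Definition univ_in_var (R : fieldType) (L : nat) (j : 'I_L) (p : {poly R})
  : {mpoly R[L]} := \sum_(k < size p) p`_k *: 'X_j ^+ k.

Definition roABP_mx (R : fieldType) (w L : nat) (sigma : 'S_L)
  (M : 'I_L -> 'M[{poly R}]_w) : 'M[{mpoly R[L]}]_w :=
  \big[@mulmx _ w w w / 1%:M]_(i < L) map_mx (univ_in_var (sigma i)) (M i).

Definition roABP_computes (R : fieldType) (w L : nat) (ok : 'S_L -> Prop)
  (P : {mpoly R[L]}) : Prop :=
  exists (sigma : 'S_L) (M : 'I_L -> 'M[{poly R}]_w) (i0 : 'I_w),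
    ok sigma /\ val i0 = 0%N /\ P = roABP_mx sigma M i0 i0.

Definition indiv_deg_le (R : fieldType) (L d : nat) (P : {mpoly R[L]}) : Prop :=
  forall m : 'X_{1..L}, m \in msupp P -> forall i : 'I_L, (m i <= d)%N.

Definition multilinear (R : fieldType) (n : nat) (f : {mpoly R[n]}) : Prop :=
  indiv_deg_le 1 f.

(* Identification of indices k in [0, 2^n) with multilinear monomials:
   the exponent of x_i (i = 0..n-1) is the i-th binary digit of k
   (least significant digit <-> x_0). *)
Definition mono_of_index (n : nat) (k : nat) : 'X_{1..n} :=
  [multinom (odd (k %/ 2 ^ i)) : nat | i < n].

Definition coeff_vec (R : fieldType) (n : nat) (f : {mpoly R[n]}) : 'I_(2 ^ n) -> R :=
  fun k => f@_(mono_of_index n k).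

(* For a permutation pi of the n variables,
   the multilinear monomials are ordered lexicographically with respect to
   the variable order x_(pi 0), ..., x_(pi (n-1)) (exponent 0 before 1);
   the r-th monomial in this order is the one whose exponent of x_(pi j) is
   the (n-1-j)-th binary digit of r; its index is sum_j digit * 2^(pi j).
   sigma : 'S_(2^n) is monomial-compatible iff sigma r is that index for all
   r, for some pi. *)
Definition lex_index (n : nat) (pi : 'S_n) (r : nat) : nat :=
  \sum_(j < n) (odd (r %/ 2 ^ (n - 1 - j)) * 2 ^ (pi j))%N.

Definition monomial_compatible (n : nat) (sigma : 'S_(2 ^ n)) : Prop :=
  exists pi : 'S_n, forall r : 'I_(2 ^ n), val (sigma r) = lex_index pi r.

Definition mult_order_ge (R : fieldType) (a : R) (k : nat) : Prop :=
  a != 0 /\ forall j : nat, (0 < j < k)%N -> a ^+ j != 1.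

(* Write F as the (1,1) entry of prod_r M_r(X_(sigma r)); since F has
   individual degree at most d, truncating every M_r to degree d does not
   change F.  Take for f a width-w^2 roABP with affine layers A_h + x B_h: its
   coefficient on the r-th monomial of the compatible order is
   beta^T P_r e, where P_r is the product of the A's and B's selected by the
   binary digits of r and beta weights the first layer.  Grouping the layers
   of F into a binary tree of blocks, the pairs (A_h, B_h) are built level by
   level so that, for every block, the block products obtained from the
   inputs beta^T P_r e span the same space of w x w matrices as those
   obtained from arbitrary inputs.  Each level asks for w^2 pairs of vectors
   spanning all blocks at once; they are chosen greedily, since escaping a
   proper span is the nonvanishing of a polynomial of low degree along lines,
   and the powers of a provide more points than the total degree.  At the top
   level, if F (coeff f) vanished for every beta, F would vanish at every
   point, hence be zero. *)

From HB Require Import structures.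
From mathcomp Require Import all_boot all_order all_algebra all_fingroup.
From mathcomp Require Import mpoly.
From mathcomp Require Import zify.
From Stdlib Require Import Classical.
Set Implicit Arguments. Unset Strict Implicit. Unset Printing Implicit Defensive.
Import GRing.Theory.

Definition bit (k i : nat) : bool := odd (i %/ 2 ^ k).

Lemma bit_small k i : i < 2 ^ k -> bit k i = false.
Proof. by move=> lt; rewrite /bit divn_small. Qed.

Lemma bit_addX k i : i < 2 ^ k -> bit k (2 ^ k + i) = true.
Proof.
by move=> lt; rewrite /bit divnDl ?dvdnn // divnn expn_gt0 /= divn_small.
Qed.

Lemma bit_addX_low k l i : l < k -> bit l (2 ^ k + i) = bit l i.
Proof.
move=> lt; rewrite /bit divnDl; last by rewrite dvdn_exp2l // ltnW.
rewrite -{1}(subnK (ltnW lt)) expnD mulnK ?expn_gt0 //.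
by rewrite oddD oddX orbF subn_eq0 leqNgt lt.
Qed.

Lemma bit_sum (a : nat -> bool) n k : k < n ->
  bit k (\sum_(l < n) a l * 2 ^ l) = a k.
Proof.
elim: n a k => [|n IH] a k //= lt.
rewrite big_ord_recl /= expn0 muln1.
have -> : \sum_(i < n) a (lift ord0 i) * 2 ^ (lift ord0 i) =
          2 * \sum_(i < n) a i.+1 * 2 ^ i.
  by rewrite big_distrr /=; apply: eq_bigr => i _; rewrite /= /bump add1n expnS mulnCA.
case: k lt => [|k] lt.
  by rewrite /bit expn0 divn1 oddD oddM /=; case: (a 0).
rewrite /bit expnS divnMA addnC mulnC divnMDl // (@divn_small (a 0)) ?addn0; last by case: (a 0).
exact: (IH (fun i => a i.+1) k lt).
Qed.

Local Open Scope ring_scope.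

Section GenericPoints.
Variables (R : fieldType) (V : Type) (v0 : V).
Variable line : V -> V -> R -> V.
Hypothesis line0 : forall a b, line a b 0 = a.
Hypothesis line1 : forall a b, line a b 1 = b.

Definition line_poly (D : nat) (g : V -> R) := forall a b, exists2 p : {poly R},
  (size p <= D.+1)%N & forall t, g (line a b t) = p.[t].

Definition generic (D : nat) (P : V -> Prop) :=
  exists g, [/\ line_poly D g, exists v, g v != 0 & forall u, g u != 0 -> P u].

Lemma eq_line_poly D g h : g =1 h -> line_poly D g -> line_poly D h.
Proof. by move=> gh lg a b; have [p sp Hp] := lg a b; exists p => // t; rewrite -gh. Qed.

Lemma line_poly_cst D c : line_poly D (fun _ => c).
Proof.
move=> a b; exists c%:P => [|t]; last by rewrite hornerC.
by rewrite size_polyC (leq_trans (leq_b1 _)).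
Qed.

Lemma line_polyD D g h : line_poly D g -> line_poly D h -> line_poly D (fun u => g u + h u).
Proof.
move=> lg lh a b; have [p sp Hp] := lg a b; have [q sq Hq] := lh a b.
exists (p + q) => [|t]; last by rewrite hornerD Hp Hq.
by rewrite (leq_trans (size_polyD _ _)) // geq_max sp sq.
Qed.

Lemma line_polyZ D c g : line_poly D g -> line_poly D (fun u => c * g u).
Proof.
move=> lg a b; have [p sp Hp] := lg a b.
exists (c *: p) => [|t]; last by rewrite hornerZ Hp.
exact: leq_trans (size_scale_leq _ _) sp.
Qed.

Lemma line_poly_sum D (I : Type) (r : seq I) (g : I -> V -> R) :
  (forall i, line_poly D (g i)) -> line_poly D (fun u => \sum_(i <- r) g i u).
Proof.
move=> lg; elim: r => [|i r IH].
  by apply: (eq_line_poly _ (line_poly_cst D 0)) => u; rewrite big_nil.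
by apply: (eq_line_poly _ (line_polyD (lg i) IH)) => u; rewrite big_cons.
Qed.

Lemma poly_nonroot_all (D m : nat) (Q : nat -> R -> Prop) :
  (forall i, (i < m)%N ->
     exists2 p : {poly R}, p != 0 /\ (size p <= D.+1)%N & forall t, p.[t] != 0 -> Q i t) ->
  exists2 p : {poly R}, p != 0 /\ (size p <= m * D + 1)%N &
    forall t, p.[t] != 0 -> forall i, (i < m)%N -> Q i t.
Proof.
elim: m => [|m IH] HQ.
  by exists 1 => //; rewrite oner_eq0 size_poly1.
have [p [pn0 sp] Hp] := IH (fun i lt => HQ i (ltnW lt)).
have [q [qn0 sq] Hq] := HQ m (ltnSn m).
exists (q * p) => [|t]; first split.
- by rewrite mulf_neq0.
- by rewrite (leq_trans (size_polyMleq _ _)) // mulSn; move: sq sp; lia.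
rewrite hornerM mulf_eq0 negb_or => /andP[qt pt] i.
by rewrite ltnS leq_eqVlt => /predU1P[->|]; [exact: Hq | exact: Hp].
Qed.

Lemma generic_common D (s : seq R) m (P : nat -> V -> Prop) :
  uniq s -> (m * D < size s)%N -> (forall i, (i < m)%N -> generic D (P i)) ->
  exists u, forall i, (i < m)%N -> P i u.
Proof.
move=> uniq_s.
(* Strengthened so that the witnesses stay nonzero at u, hence restrict to
   nonzero polynomials on every line through u. *)
pose P' i u := exists g, [/\ line_poly D g, g u != 0 & forall u, g u != 0 -> P i u].
suff H : (m * D < size s)%N -> (forall i, (i < m)%N -> generic D (P i)) ->
    exists u, forall i, (i < m)%N -> P' i u.
  by move=> lt HP; have [u Hu] := H lt HP; exists u => i /Hu [g [_ gu]]; apply.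
elim: m => [|m IH] lt HP; first by exists v0.
have [|u0 Hu0] := IH _ (fun i lt => HP i (ltnW lt)).
  by apply: leq_ltn_trans lt; rewrite leq_mul2r leqnSn orbT.
have [g1 [lg1 [v1 gv1] Hg1]] := HP m (ltnSn m).
have witness g t0 : line_poly D g -> g (line u0 v1 t0) != 0 ->
    exists2 p : {poly R}, p != 0 /\ (size p <= D.+1)%N &
      forall t, p.[t] != 0 -> g (line u0 v1 t) != 0.
  move=> lg gt0; have [p sp Hp] := lg u0 v1.
  exists p => [|t]; last by rewrite Hp.
  by split=> //; apply: contraNneq gt0; rewrite Hp => ->; rewrite horner0.
have [p [pn0 sp] Hp] : exists2 p : {poly R}, p != 0 /\ (size p <= m.+1 * D + 1)%N &
    forall t, p.[t] != 0 -> forall i, (i < m.+1)%N -> P' i (line u0 v1 t).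
  apply: poly_nonroot_all => i; rewrite ltnS leq_eqVlt => /predU1P[->|lti].
    have [|p sp Hp] := witness g1 1 lg1; first by rewrite line1.
    by exists p => // t /Hp gt; exists g1.
  have [g [lg gu Hg]] := Hu0 i lti.
  have [|p sp Hp] := witness g 0 lg; first by rewrite line0.
  by exists p => // t /Hp gt; exists g.
have /allPn [t _ nr] : ~~ all (root p) s.
  apply/negP => /(max_poly_roots pn0)/(_ uniq_s).
  by rewrite ltnNge (leq_trans sp) // addn1.
by exists (line u0 v1 t); apply: Hp.
Qed.

Section Spanning.
Variable k : nat.

Definition seq_span (vs : seq 'rV[R]_k) : 'M[R]_k := foldr (fun v S => (v + S)%MS) 0 vs.

Lemma seq_span_kermx (vs : seq 'rV[R]_k) (v : 'rV[R]_k) (z : 'cV[R]_k) :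
  (forall x, x \in vs -> x *m z = 0) -> (v <= seq_span vs)%MS -> v *m z = 0.
Proof.
move=> Hz /submx_trans sv; apply/sub_kermxP/sv => {v sv}.
elim: vs Hz => [|x vs IH] Hz; first exact: sub0mx.
rewrite /= addsmx_sub; apply/andP; split.
  by apply/sub_kermxP/Hz; rewrite mem_head.
by apply: IH => y yin; apply: Hz; rewrite in_cons yin orbT.
Qed.

Lemma generic_notin_span D (phi : V -> 'rV[R]_k) (S : 'M[R]_k) :
  (forall j, line_poly D (fun u => phi u 0 j)) -> (exists u, ~~ (phi u <= S)%MS) ->
  generic D (fun u => ~~ (phi u <= S)%MS).
Proof.
move=> lphi [u1 nu1].
have /existsP [j Hj] : [exists j, (phi u1 *m cokermx S) 0 j != 0].
  apply: contraNT nu1 => /existsPn H; rewrite submxE; apply/eqP/rowP => j.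
  by apply/eqP; rewrite [X in _ == X]mxE; apply/negbNE; exact: H.
exists (fun u => (phi u *m cokermx S) 0 j); split => [||u]; last first.
- by apply: contra; rewrite submxE => /eqP ->; rewrite mxE.
- by exists u1.
apply: (eq_line_poly (g := fun u => \sum_l cokermx S l j * phi u 0 l)).
  by move=> u; rewrite mxE; apply: eq_bigr => l _; rewrite mulrC.
by apply: line_poly_sum => l; apply: line_polyZ.
Qed.

(* Greedy: each new point raises the rank of every span that is not yet full. *)
Lemma spanning_points D (s : seq R) m (phi : nat -> V -> 'rV[R]_k) :
  uniq s -> (m * D < size s)%N ->
  (forall i j, (i < m)%N -> line_poly D (fun u => phi i u 0 j)) ->
  exists2 us : seq V, size us = k &
    forall i, (i < m)%N -> forall u, (phi i u <= seq_span [seq phi i x | x <- us])%MS.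
Proof.
move=> uniq_s lt lp.
pose S i (xs : seq V) := seq_span [seq phi i x | x <- xs].
suff H t : (t <= k)%N -> exists2 xs : seq V, size xs = t & forall i, (i < m)%N ->
    (forall u, (phi i u <= S i xs)%MS) \/ (t <= \rank (S i xs))%N.
  have [xs sz Hx] := H k (leqnn k); exists xs => // i lti u.
  case: (Hx i lti) => [->//|rk]; apply: submx_full.
  by rewrite /row_full eqn_leq rank_leq_col.
elim: t => [|t IH] ltk; first by exists [::] => // i _; right.
have [xs sz Hx] := IH (ltnW ltk).
have [u Hu] : exists u, forall i, (i < m)%N ->
    (forall u', (phi i u' <= S i xs)%MS) \/ ~~ (phi i u <= S i xs)%MS.
  apply: (generic_common uniq_s lt) => i lti.
  have [sat|unsat] := classic (forall u', (phi i u' <= S i xs)%MS).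
    exists (fun _ => 1); split=> [||u _]; [exact: line_poly_cst| |by left].
    by exists v0; rewrite oner_eq0.
  have [|g [lg gv Hg]] := @generic_notin_span D (phi i) (S i xs) (fun j => lp i j lti).
    by have [u1 /negP nu1] := not_all_ex_not _ _ unsat; exists u1.
  by exists g; split=> // u' /Hg; right.
exists (u :: xs); first by rewrite /= sz.
move=> i lti; have sub_cons : (S i xs <= S i (u :: xs))%MS by exact: addsmxSr.
case: (Hx i lti) => [sat|rk]; first by left => u'; apply: submx_trans (sat u') sub_cons.
case: (Hu i lti) => [sat|ns]; first by left => u'; apply: submx_trans (sat u') sub_cons.
right; apply: leq_ltn_trans rk _; rewrite (ltn_leqif (mxrank_leqif_sup sub_cons)).
by apply: contra ns => /(submx_trans _)-> //; exact: addsmxSl.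
Qed.

End Spanning.
End GenericPoints.

Lemma size_mulmx_poly (R : fieldType) w (A B : 'M[{poly R}]_w) (a b : nat) :
  (forall i j, size (A i j) <= a.+1)%N -> (forall i j, size (B i j) <= b.+1)%N ->
  forall i j, (size ((A *m B) i j) <= (a + b).+1)%N.
Proof.
move=> HA HB i j; rewrite mxE; apply: leq_trans (size_sum _ _ _) _.
apply/bigmax_leqP => l _; apply: leq_trans (size_polyMleq _ _) _.
rewrite -subn1; apply: leq_trans (leq_sub2r 1 (leq_add (HA i l) (HB l j))) _; lia.
Qed.

Lemma mxvec_mulmx_linr (R : fieldType) w (X Y : 'M[R]_w) (z : 'cV[R]_(w * w)) :
  mxvec (X *m Y) *m z = mxvec X *m (lin_mx (mulmxr Y) *m z).
Proof. by rewrite mulmxA mul_vec_lin. Qed.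

Lemma mxvec_mulmx_linl (R : fieldType) w (X Y : 'M[R]_w) (z : 'cV[R]_(w * w)) :
  mxvec (X *m Y) *m z = mxvec Y *m (lin_mx (mulmx X) *m z).
Proof. by rewrite mulmxA mul_vec_lin. Qed.

Section Generators.
Variables (R : fieldType) (K : nat).

Definition gen_input (Q : nat -> 'cV[R]_K) (beta : 'cV[R]_K) (i : nat) : R :=
  (beta^T *m Q i) 0 0.

Lemma gen_inputD Q beta beta' t i :
  gen_input Q (beta + t *: beta') i = gen_input Q beta i + t * gen_input Q beta' i.
Proof. by rewrite /gen_input linearD linearZ /= mulmxDl -scalemxAl !mxE. Qed.

Definition gen_cat p (A B : 'M[R]_K) (Q : nat -> 'M[R]_(K, p)) (h i : nat) :=
  if (i < 2 ^ h)%N then A *m Q i else B *m Q (i - 2 ^ h)%N.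

Lemma gen_input_cat A B Q h beta i :
  gen_input (gen_cat A B Q h) beta i =
  if (i < 2 ^ h)%N then gen_input Q (A^T *m beta) i
  else gen_input Q (B^T *m beta) (i - 2 ^ h)%N.
Proof. by rewrite /gen_input /gen_cat; case: ifP; rewrite trmx_mul trmxK mulmxA. Qed.

Fixpoint word_prod (G : nat -> 'M[R]_K * 'M[R]_K) (h : nat) : nat -> 'M[R]_K :=
  if h is h'.+1 then gen_cat (G h').1 (G h').2 (word_prod G h') h' else fun _ => 1%:M.

Lemma eq_word_prod G G' h : (forall j, (j < h)%N -> G j = G' j) ->
  word_prod G h = word_prod G' h.
Proof. by elim: h => [|h IH] H //=; rewrite IH ?H // => j ltj; apply: H; lia. Qed.

End Generators.

Lemma big_cat_mulmx (R : fieldType) w (I : Type) (r1 r2 : seq I) (F : I -> 'M[R]_w) :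
  \big[@mulmx _ w w w/1%:M]_(i <- r1 ++ r2) F i =
  \big[@mulmx _ w w w/1%:M]_(i <- r1) F i *m \big[@mulmx _ w w w/1%:M]_(i <- r2) F i.
Proof.
elim: r1 => [|x r1 IH] /=; first by rewrite big_nil mul1mx.
by rewrite !big_cons IH mulmxA.
Qed.

Section BlockProducts.
Variables (R : fieldType) (w d : nat) (T : nat -> 'M[{poly R}]_w).
Hypothesis size_T : forall r a b, (size (T r a b) <= d.+1)%N.

Definition layer r (x : R) : 'M[R]_w := map_mx (fun p => p.[x]) (T r).

(* The product of the 2^h layers b 2^h, ..., b 2^h + 2^h - 1, layer b 2^h + i
   being evaluated at c i. *)
Fixpoint block (h b : nat) (c : nat -> R) : 'M[R]_w :=
  if h is h'.+1 then block h' b.*2 c *m block h' b.*2.+1 (fun i => c (i + 2 ^ h')%N)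
  else layer b (c 0%N).

Fixpoint block_line (h b : nat) (c c' : nat -> R) : 'M[{poly R}]_w :=
  if h is h'.+1 then
    block_line h' b.*2 c c' *m
    block_line h' b.*2.+1 (fun i => c (i + 2 ^ h')%N) (fun i => c' (i + 2 ^ h')%N)
  else map_mx (fun p => p \Po ((c 0%N)%:P + c' 0%N *: 'X)) (T b).

Lemma eq_block h b c c' : (forall i, (i < 2 ^ h)%N -> c i = c' i) ->
  block h b c = block h b c'.
Proof.
elim: h b c c' => [|h IH] b c c' H /=; first by rewrite H.
by congr (_ *m _); apply: IH => i lti; apply: H; rewrite expnS; lia.
Qed.

Lemma blockE h b c :
  block h b c = \big[@mulmx _ w w w/1%:M]_(i <- iota 0 (2 ^ h)) layer (b * 2 ^ h + i) (c i).
Proof.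
elim: h b c => [|h IH] b c /=; first by rewrite expn0 big_cons big_nil mulmx1 muln1 addn0.
rewrite !IH; have -> : (2 ^ h.+1 = 2 ^ h + 2 ^ h)%N by rewrite expnS; lia.
rewrite iotaD big_cat_mulmx add0n; congr (_ *m _).
  by apply: eq_bigr => i _; congr (layer _ _); nia.
have -> : iota (2 ^ h) (2 ^ h) = map (addn (2 ^ h)) (iota 0 (2 ^ h)).
  by rewrite -iotaDl addn0.
rewrite big_map; apply: eq_bigr => i _.
by rewrite [(i + 2 ^ h)%N]addnC; congr (layer _ _); nia.
Qed.

Lemma block_lineE h b c c' t :
  map_mx (horner_eval t) (block_line h b c c') = block h b (fun i => c i + t * c' i).
Proof.
elim: h b c c' => [|h IH] b c c' /=; last by rewrite map_mxM !IH.
apply/matrixP => i j; rewrite !mxE horner_evalE horner_comp.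
by rewrite hornerD hornerC hornerZ hornerX mulrC.
Qed.

Lemma size_block_line h b c c' i j : (size (block_line h b c c' i j) <= (2 ^ h * d).+1)%N.
Proof.
elim: h b c c' i j => [|h IH] b c c' i j /=.
  rewrite mxE; apply: leq_trans (size_comp_poly_leq _ _) _.
  have : (size ((c 0%N)%:P + c' 0%N *: 'X : {poly R})%R <= 2)%N.
    apply: leq_trans (size_polyD _ _) _; rewrite geq_max size_polyC.
    by rewrite (leq_trans (leq_b1 _)) //= (leq_trans (size_scale_leq _ _)) // size_polyX.
  by have := size_T b i j; rewrite mul1n; nia.
by apply: leq_trans (size_mulmx_poly (IH _ _ _) (IH _ _ _) i j) _; rewrite expnS; lia.
Qed.

Variable K : nat.

Definition pair_block (Q : nat -> 'cV[R]_K) h b (u : 'cV[R]_K * 'cV[R]_K) :=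
  block h b.*2 (gen_input Q u.1) *m block h b.*2.+1 (gen_input Q u.2).

Lemma block_gen_cat A B Q h b beta :
  block h.+1 b (gen_input (gen_cat A B Q h) beta) = pair_block Q h b (A^T *m beta, B^T *m beta).
Proof.
congr (_ *m _); apply: eq_block => i lti; rewrite gen_input_cat ?lti //.
by rewrite ltnNge leq_addl /= addnK.
Qed.

Definition pair_line (u v : 'cV[R]_K * 'cV[R]_K) (t : R) :=
  (u.1 + t *: (v.1 - u.1), u.2 + t *: (v.2 - u.2)).

Lemma pair_line0 u v : pair_line u v 0 = u.
Proof. by case: u => x y; rewrite /pair_line !scale0r !addr0. Qed.

Lemma pair_line1 u v : pair_line u v 1 = v.
Proof. by case: u v => x y [x' y']; rewrite /pair_line !scale1r ![_ + (_ - _)]addrC !subrK. Qed.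

Lemma line_poly_pair_block Q h b j :
  line_poly pair_line (2 ^ h.+1 * d) (fun u => mxvec (pair_block Q h b u) 0 j).
Proof.
case/mxvec_indexP: j => i j u v.
exists ((block_line h b.*2 (gen_input Q u.1) (gen_input Q (v.1 - u.1)) *m
         block_line h b.*2.+1 (gen_input Q u.2) (gen_input Q (v.2 - u.2))) i j).
  by apply: leq_trans (size_mulmx_poly (size_block_line _ _ _ _)
                                        (size_block_line _ _ _ _) i j) _; rewrite expnS; lia.
move=> t; have ev (M : 'M[{poly R}]_w) : (M i j).[t] = map_mx (horner_eval t) M i j.
  by rewrite mxE.
rewrite mxvecE ev map_mxM !block_lineE.
by congr ((_ *m _) i j); apply: eq_block => k _; rewrite gen_inputD.
Qed.

Variable n : nat.

(* Spanning, phrased through annihilators: for every block at level h, the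
   products with inputs generated by Q span all products of that block. *)
Definition spanning h (Q : nat -> 'cV[R]_K) := forall b, (b < 2 ^ (n - h))%N ->
  forall z : 'cV[R]_(w * w),
    (forall beta, mxvec (block h b (gen_input Q beta)) *m z = 0) ->
    forall c, mxvec (block h b c) *m z = 0.

Lemma spanning_pair_block h Q b (z : 'cV[R]_(w * w)) : (h < n)%N -> (b < 2 ^ (n - h.+1))%N ->
  spanning h Q -> (forall u, mxvec (pair_block Q h b u) *m z = 0) ->
  forall c, mxvec (block h.+1 b c) *m z = 0.
Proof.
move=> hn ltb span_h Hz c.
have [lt2b lt2b1] : (b.*2 < 2 ^ (n - h))%N /\ (b.*2.+1 < 2 ^ (n - h))%N.
  have -> : (n - h = (n - h.+1).+1)%N by lia.
  by move: ltb; rewrite expnS; lia.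
have Hl g c0 : mxvec (block h b.*2 c0 *m block h b.*2.+1 (gen_input Q g)) *m z = 0.
  rewrite mxvec_mulmx_linr; apply: (span_h _ lt2b) => beta.
  by rewrite -mxvec_mulmx_linr; apply: (Hz (beta, g)).
rewrite /= mxvec_mulmx_linl; apply: (span_h _ lt2b1) => g.
by rewrite -mxvec_mulmx_linl; apply: Hl.
Qed.

Lemma spanning_step h Q (s : seq R) :
  uniq s -> (2 ^ n * d < size s)%N -> (w * w <= K)%N -> (h < n)%N ->
  spanning h Q -> exists A B, spanning h.+1 (gen_cat A B Q h).
Proof.
move=> uniq_s lts wK hn span_h.
have [vs sz_vs Hvs] := @spanning_points R _ (0, 0) pair_line pair_line0 pair_line1
  (w * w) (2 ^ h.+1 * d) s (2 ^ (n - h.+1)) (fun b u => mxvec (pair_block Q h b u)) uniq_s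
  ltac:(by rewrite mulnA -expnD subnK) (fun b j _ => line_poly_pair_block Q h b j).
(* The i-th columns of A^T and B^T form the i-th chosen pair, which the
   weight e_i therefore reproduces. *)
pose A : 'M[R]_K := \matrix_(i, a) (nth 0 vs i).1 a 0.
pose B : 'M[R]_K := \matrix_(i, a) (nth 0 vs i).2 a 0.
exists A, B => b ltb z Hz; apply: (spanning_pair_block hn ltb span_h) => u.
apply: (seq_span_kermx _ (Hvs b ltb u)) => _ /mapP [v vin ->].
have lti : (index v vs < K)%N by apply: leq_trans wK; rewrite -sz_vs index_mem.
have := Hz (delta_mx (Ordinal lti) 0); rewrite block_gen_cat -!colE.
suff -> : (col (Ordinal lti) A^T, col (Ordinal lti) B^T) = v by [].
rewrite [RHS]surjective_pairing.
by congr (_, _); apply/matrixP => a j; rewrite [j]ord1 !mxE /= nth_index.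
Qed.

Lemma eq_spanning h Q Q' : Q =1 Q' -> spanning h Q -> spanning h Q'.
Proof.
move=> QQ' span_h b ltb z Hz; apply: span_h => // beta; rewrite -(Hz beta).
by congr (mxvec _ *m _); apply: eq_block => i _; rewrite /gen_input QQ'.
Qed.

Lemma spanning_word_prod (i0 : 'I_K) (s : seq R) :
  uniq s -> (2 ^ n * d < size s)%N -> (w * w <= K)%N ->
  exists G, spanning n (fun i => word_prod G n i *m delta_mx i0 0).
Proof.
move=> uniq_s lts wK.
suff H h : (h <= n)%N -> exists G, spanning h (fun i => word_prod G h i *m delta_mx i0 0).
  exact: H.
elim: h => [_|h IH hn].
  exists (fun=> (0, 0)) => b _ z Hz c; rewrite -(Hz (c 0%N *: delta_mx i0 0)) /=.
  congr (mxvec (layer _ _) *m _).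
  by rewrite /gen_input mul1mx linearZ /= -scalemxAl trmx_delta mul_delta_mx !mxE !eqxx mulr1.
have [G span_h] := IH (ltnW hn).
have [A [B span_h1]] := spanning_step uniq_s lts wK hn span_h.
exists (fun j => if j == h then (A, B) else G j); apply: eq_spanning span_h1 => i /=.
rewrite eqxx (@eq_word_prod _ _ _ G) => [|j ltj]; last by rewrite (ltn_eqF ltj).
by rewrite /gen_cat; case: ifP; rewrite mulmxA.
Qed.

Lemma spanning_entry Q a b : spanning n Q ->
  (forall beta, block n 0 (gen_input Q beta) a b = 0) -> forall c, block n 0 c a b = 0.
Proof.
move=> span_n H0 c; pose z : 'cV[R]_(w * w) := delta_mx (mxvec_index a b) 0.
have entry X : (mxvec X *m z) 0 0 = X a b by rewrite -colE mxE mxvecE.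
have := span_n 0%N; rewrite subnn expn0 => /(_ isT z) Hz.
rewrite -entry Hz ?mxE // => beta.
by apply/rowP => i; rewrite ord1 entry H0 mxE.
Qed.

End BlockProducts.

Section Supports.
Variables (R : fieldType) (L : nat).
Implicit Types (P : 'X_{1..L} -> Prop) (p q : {mpoly R[L]}).

Definition msupp_all P p := forall m, m \in msupp p -> P m.

Lemma msupp_all0 P : msupp_all P 0.
Proof. by move=> m; rewrite msupp0. Qed.

Lemma msupp_allD P p q : msupp_all P p -> msupp_all P q -> msupp_all P (p + q).
Proof. by move=> Hp Hq m /msuppD_le; rewrite mem_cat => /orP [/Hp|/Hq]. Qed.

Lemma msupp_allZ P c p : msupp_all P p -> msupp_all P (c *: p).
Proof. by move=> Hp m /msuppZ_le /Hp. Qed.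

Lemma msupp_all_sum P (I : Type) (r : seq I) (F : I -> {mpoly R[L]}) :
  (forall i, msupp_all P (F i)) -> msupp_all P (\sum_(i <- r) F i).
Proof.
move=> H; elim: r => [|i r IH]; first by rewrite big_nil; exact: msupp_all0.
by rewrite big_cons; apply: msupp_allD.
Qed.

Lemma msupp_allM (P1 P2 P3 : 'X_{1..L} -> Prop) p q :
  (forall m1 m2, P1 m1 -> P2 m2 -> P3 (m1 + m2)%MM) ->
  msupp_all P1 p -> msupp_all P2 q -> msupp_all P3 (p * q).
Proof.
move=> H Hp Hq m /msuppM_le /allpairsP [[m1 m2] /= [in1 in2 ->]].
by apply: H; [apply: Hp|apply: Hq].
Qed.

Lemma msupp_allX P m : P m -> msupp_all P 'X_[m].
Proof. by move=> Pm m'; rewrite msuppX inE => /eqP ->. Qed.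

Lemma univ_in_var_widen (j : 'I_L) (p : {poly R}) N : (size p <= N)%N ->
  univ_in_var j p = \sum_(k < N) p`_k *: 'X_j ^+ k.
Proof.
move=> sN; rewrite /univ_in_var (big_ord_widen _ (fun k => p`_k *: 'X_j ^+ k) sN).
rewrite big_mkcond /=; apply: eq_bigr => k _; case: ifP => // /negbT.
by rewrite -leqNgt => /(nth_default 0) ->; rewrite scale0r.
Qed.

Lemma msupp_univ_in_var (j : 'I_L) (p : {poly R}) :
  msupp_all (fun m => exists2 k, (k < size p)%N & m = (U_(j) *+ k)%MM) (univ_in_var j p).
Proof.
apply: msupp_all_sum => k; apply: msupp_allZ; rewrite mpolyXn.
by apply: msupp_allX; exists k.
Qed.

Lemma meval_univ_in_var (x : 'I_L -> R) (j : 'I_L) (p : {poly R}) :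
  (univ_in_var j p).@[x] = p.[x j].
Proof.
rewrite /univ_in_var horner_coef (big_morph (meval x) (mevalD x) (meval0 x)).
by apply: eq_bigr => k _; rewrite mevalZ rmorphXn /= mevalXU.
Qed.

Variable d : nat.

Definition high_deg (m : 'X_{1..L}) := exists v, (d < m v)%N.

Lemma msupp_univ_in_var_take (j : 'I_L) (p : {poly R}) :
  msupp_all high_deg (univ_in_var j p - univ_in_var j (take_poly d.+1 p)).
Proof.
pose N := maxn (size p) d.+1.
rewrite (@univ_in_var_widen j p N) ?leq_maxl // (@univ_in_var_widen j _ N); last first.
  by apply: leq_trans (size_take_poly _ _) _; rewrite leq_maxr.
rewrite -sumrB; apply: msupp_all_sum => k; rewrite -scalerBl coef_take_poly.
case: ifP => [_|/negbT]; first by rewrite subrr scale0r; exact: msupp_all0.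
rewrite -leqNgt => dk; apply: msupp_allZ; rewrite mpolyXn; apply: msupp_allX.
by exists j; rewrite mulmnE mnm1E eqxx mul1n.
Qed.

End Supports.

Section Truncation.
Variables (R : fieldType) (L w d : nat) (sigma : 'S_L) (M : 'I_L -> 'M[{poly R}]_w).

Let layer_mx (x : 'I_L) := map_mx (univ_in_var (sigma x)) (M x).
Let take_layer_mx (x : 'I_L) := map_mx (univ_in_var (sigma x)) (map_mx (take_poly d.+1) (M x)).

Definition low_deg (r : seq 'I_L) (m : 'X_{1..L}) :=
  (forall v, m v <= d)%N /\ forall v, v \notin map sigma r -> m v = 0%N.

(* Read-once: each variable occurs in a single layer, so the truncated
   product keeps every exponent at most d. *)
Lemma msupp_prod_take (r : seq 'I_L) : uniq (map sigma r) -> forall a b,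
  msupp_all (low_deg r) ((\big[@mulmx _ w w w/1%:M]_(x <- r) take_layer_mx x) a b).
Proof.
elim: r => [|x r IH] /= un a b.
  rewrite big_nil mxE; case: (a == b); last exact: msupp_all0.
  by rewrite mulr1n -mpolyX0; apply: msupp_allX; split=> v; rewrite mnm0E.
move: un => /andP [nx un]; rewrite big_cons mxE; apply: msupp_all_sum => l.
apply: msupp_allM (IH un l b); last by rewrite !mxE; exact: msupp_univ_in_var.
move=> _ m2 [k szk ->] [H1 H2]; split => v; rewrite mnmDE mulmnE mnm1E.
  case: eqP => [<-|_]; last by rewrite mul0n add0n.
  by rewrite H2 // addn0 mul1n -ltnS (leq_trans szk) ?size_take_poly.
rewrite in_cons negb_or => /andP [nv nr].
by case: eqP => [E|_]; [move: nv; rewrite E eqxx | rewrite mul0n add0n H2].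
Qed.

Lemma msupp_prod_sub_take (r : seq 'I_L) a b :
  msupp_all (high_deg d) ((\big[@mulmx _ w w w/1%:M]_(x <- r) layer_mx x -
                           \big[@mulmx _ w w w/1%:M]_(x <- r) take_layer_mx x) a b).
Proof.
elim: r a b => [|x r IH] a b; first by rewrite !big_nil subrr mxE; exact: msupp_all0.
rewrite !big_cons; set A := layer_mx x; set A' := take_layer_mx x.
set B := \big[_/_]_(i <- r) layer_mx i; set B' := \big[_/_]_(i <- r) take_layer_mx i.
have -> : A *m B - A' *m B' = (A - A') *m B + A' *m (B - B').
  by rewrite mulmxBl mulmxBr addrA subrK.
rewrite [X in msupp_all _ X]mxE; apply: msupp_allD; rewrite mxE; apply: msupp_all_sum => l.
  apply: (@msupp_allM _ _ (high_deg d) (fun _ => True)) => //.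
    by move=> m1 m2 [v Hv] _; exists v; rewrite mnmDE; lia.
  rewrite [X in msupp_all _ X]mxE [X in msupp_all _ (_ + X)]mxE !mxE.
  exact: msupp_univ_in_var_take.
apply: (@msupp_allM _ _ (fun _ => True) (high_deg d)) => //.
by move=> m1 m2 _ [v Hv]; exists v; rewrite mnmDE; lia.
Qed.

Lemma roABP_mx_take_poly (i0 : 'I_w) :
  indiv_deg_le d (roABP_mx sigma M i0 i0) ->
  roABP_mx sigma M i0 i0 = roABP_mx sigma (fun r => map_mx (take_poly d.+1) (M r)) i0 i0.
Proof.
move=> Hdeg; apply/eqP; rewrite -subr_eq0; apply/eqP/msuppnil0.
set E := _ - _.
have hE : msupp_all (high_deg d) E.
  have := @msupp_prod_sub_take (index_enum 'I_L) i0 i0.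
  by rewrite [X in msupp_all _ X]mxE [X in msupp_all _ (_ + X)]mxE.
have lE : msupp_all (low_deg (index_enum 'I_L))
    (roABP_mx sigma (fun r => map_mx (take_poly d.+1) (M r)) i0 i0).
  by apply: msupp_prod_take; rewrite map_inj_uniq ?index_enum_uniq //; exact: perm_inj.
case Es: (msupp E) => [//|m s].
have mE : m \in msupp E by rewrite Es mem_head.
have [v Hv] := hE m mE; move: mE => /msuppB_le; rewrite mem_cat.
by case/orP => [/Hdeg H|/lE [H _]]; move: (H v); rewrite leqNgt Hv.
Qed.

End Truncation.

Lemma meval_roABP_mx (R : fieldType) L w (sigma : 'S_L) (M : 'I_L -> 'M[{poly R}]_w)
    (x : 'I_L -> R) a b :
  (roABP_mx sigma M a b).@[x] =
  (\big[@mulmx _ w w w/1%:M]_(i < L) map_mx (fun p => p.[x (sigma i)]) (M i)) a b.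
Proof.
have -> : forall A : 'M[{mpoly R[L]}]_w, (A a b).@[x] = map_mx (meval x) A a b.
  by move=> A; rewrite mxE.
rewrite /roABP_mx; congr (fun_of_matrix _ a b).
elim: (index_enum _) => [|i r IH]; first by rewrite !big_nil map_mx1.
rewrite !big_cons map_mxM IH; congr (_ *m _).
by apply/matrixP => a0 b0; rewrite !mxE; exact: meval_univ_in_var.
Qed.

Section IdentityLemma.
Variables (R : fieldType) (L d : nat) (s : seq R).
Hypotheses (uniq_s : uniq s) (d_lt_s : (d < size s)%N).

Definition mnm_drop (v : 'I_L) (m : 'X_{1..L}) : 'X_{1..L} :=
  [multinom (if i == v then 0%N else m i) | i < L].

Lemma mnm_dropK v m : (mnm_drop v m + U_(v) *+ m v)%MM = m.
Proof.
apply/mnmP => i; rewrite mnmDE mnmE mulmnE mnm1E eq_sym.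
by case: eqP => [->|_]; rewrite ?add0n ?mul1n ?mul0n ?addn0.
Qed.

Definition var_coef (p : {mpoly R[L]}) (v : 'I_L) (j : nat) : {mpoly R[L]} :=
  \sum_(m <- msupp p) (if m v == j then p@_m *: 'X_[mnm_drop v m] else 0).

Lemma var_coef_decomp p v : (forall m, m \in msupp p -> m v <= d)%N ->
  p = \sum_(j < d.+1) var_coef p v j * 'X_v ^+ j.
Proof.
move=> Hd; rewrite [LHS]mpolyE /var_coef.
under [RHS]eq_bigr => j _ do rewrite mulr_suml.
rewrite exchange_big /=; apply: eq_big_seq => m min.
have ltm : (m v < d.+1)%N by rewrite ltnS Hd.
rewrite (bigD1 (Ordinal ltm)) //= eqxx big1 ?addr0.
  by rewrite -scalerAl mpolyXn -mpolyXD mnm_dropK.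
move=> j nj; case: eqP => [E|_]; last by rewrite mul0r.
by move: nj; rewrite -(inj_eq val_inj) /= E eqxx.
Qed.

Lemma meval_var_coef p v j x t :
  (var_coef p v j).@[[eta x with v |-> t]] = (var_coef p v j).@[x].
Proof.
rewrite /var_coef !(big_morph (meval _) (mevalD _) (meval0 _)).
apply: eq_bigr => m _; case: ifP => _; last by rewrite !meval0.
rewrite !mevalZ !mevalX; congr (_ * _); apply: eq_bigr => i _ /=.
by rewrite mnmE; case: eqP => // ->; rewrite !expr0.
Qed.

Lemma msupp_var_coef p v j m : m \in msupp (var_coef p v j) ->
  exists2 m', m' \in msupp p & m = mnm_drop v m'.
Proof.
move/msupp_sum_le => /flattenP [ms /mapP [m' m'in ->]].
case: ifP => _; last by rewrite msupp0.
by move/msuppZ_le; rewrite msuppX inE => /eqP ->; exists m' => //; move: m'in; rewrite mem_filter.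
Qed.

Lemma mpoly_eq0_vars_lt k (p : {mpoly R[L]}) :
  (forall m, m \in msupp p -> (forall v, m v <= d)%N /\ forall v : 'I_L, (k <= v)%N -> m v = 0%N) ->
  (forall x, p.@[x] = 0) -> p = 0.
Proof.
elim: k p => [|k IH] p Hp H0.
  have Ep : p = (\sum_(m <- msupp p) p@_m) *: 1.
    rewrite [LHS]mpolyE scaler_suml; apply: eq_big_seq => m /Hp [_ H].
    by rewrite -mpolyX0; congr (_ *: 'X_[_]); apply/mnmP => v; rewrite mnm0E H.
  by have := H0 (fun _ => 0); rewrite Ep mevalZ meval1 mulr1 => ->; rewrite scale0r.
have [ltkL|geL] := ltnP k L; last first.
  by apply: IH => // m /Hp [H1 H2]; split=> // v kv; move: (ltn_ord v); lia.
pose v := Ordinal ltkL.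
have Hdv m : m \in msupp p -> (m v <= d)%N by case/Hp.
rewrite (var_coef_decomp Hdv) big1 // => j _.
suff -> : var_coef p v j = 0 by rewrite mul0r.
apply: IH => [m /msupp_var_coef [m' /Hp [H1 H2] ->]|x].
  split=> u; rewrite mnmE; first by case: ifP.
  case: eqP => // /eqP nu ku; apply: H2; rewrite leq_eqVlt in ku.
  by case/orP: ku => [/eqP E|//]; move: nu; rewrite -(inj_eq val_inj) /= E eqxx.
pose q := \poly_(i < d.+1) (var_coef p v i).@[x].
suff /(congr1 (fun r : {poly R} => r`_j)) : q = 0 by rewrite coef_poly coef0 ltn_ord.
apply: contraTeq d_lt_s => qn0; rewrite -leqNgt -ltnS.
apply: leq_trans (size_poly _ _); apply: (max_poly_roots qn0 _ uniq_s); apply/allP => t _.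
rewrite /root horner_poly; apply/eqP; rewrite -[RHS](H0 [eta x with v |-> t]).
rewrite {2}(var_coef_decomp Hdv) (big_morph (meval _) (mevalD _) (meval0 _)).
by apply: eq_bigr => i _; rewrite mevalM meval_var_coef rmorphXn /= mevalXU /= eqxx.
Qed.

Lemma mpoly_eq0_of_meval (p : {mpoly R[L]}) :
  indiv_deg_le d p -> (forall x, p.@[x] = 0) -> p = 0.
Proof.
move=> Hd; apply: (@mpoly_eq0_vars_lt L) => m /Hd H; split=> // v Lv.
by move: (ltn_ord v); lia.
Qed.

End IdentityLemma.

Section AffineRoABP.
Variables (R : fieldType) (n' K : nat).
Local Notation n := n'.+1.
Variables (pi : 'S_n) (G : nat -> 'M[R]_K * 'M[R]_K).

(* Level h is the layer n' - h, reading the variable x_(pi (n' - h)) with the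
   affine matrix (G h).1 + x (G h).2; so level 0 is the last layer. *)
Definition level_var (h : nat) : 'I_n := pi (inord (n' - h)).

Definition affine_layer (j : 'I_n) : 'M[{poly R}]_K :=
  map_mx polyC (G (n' - j)).1 + map_mx (fun a => a *: 'X) (G (n' - j)).2.

Definition affine_roABP (i0 : 'I_K) : {mpoly R[n]} := roABP_mx pi affine_layer i0 i0.

Fixpoint level_mono (h : nat) : nat -> 'X_{1..n} :=
  if h is h'.+1 then fun i =>
    if (i < 2 ^ h')%N then level_mono h' i else (level_mono h' (i - 2 ^ h') + U_(level_var h'))%MM
  else fun _ => 0%MM.

Definition mx_monomial (m : 'X_{1..n}) (A : 'M[R]_K) : 'M[{mpoly R[n]}]_K :=
  map_mx (fun a => a *: 'X_[m]) A.

Lemma mx_monomialM m1 m2 A B :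
  mx_monomial m1 A *m mx_monomial m2 B = mx_monomial (m1 + m2) (A *m B).
Proof.
apply/matrixP => i j; rewrite !mxE scaler_suml; apply: eq_bigr => l _.
by rewrite !mxE mpolyXD -scalerAl -scalerAr scalerA.
Qed.

Lemma univ_in_var_affine (v : 'I_n) (c e : R) :
  univ_in_var v (c%:P + e *: 'X) = c *: 'X_[0%MM] + e *: 'X_[U_(v)].
Proof.
rewrite (@univ_in_var_widen R n v _ 2); last first.
  apply: leq_trans (size_polyD _ _) _; rewrite geq_max size_polyC.
  by rewrite (leq_trans (leq_b1 _)) //= (leq_trans (size_scale_leq _ _)) // size_polyX.
rewrite big_ord_recl big_ord1 /= !coefD !coefC !coefZ !coefX /=.
by rewrite mulr0 mulr1 addr0 add0r expr0 expr1 mpolyX0.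
Qed.

Lemma affine_layer_level h : (h <= n')%N ->
  map_mx (univ_in_var (pi (inord (n' - h)))) (affine_layer (inord (n' - h))) =
  mx_monomial 0 (G h).1 + mx_monomial U_(level_var h) (G h).2.
Proof.
move=> hn; apply/matrixP => i j; rewrite !mxE inordK; last by lia.
have -> : (n' - (n' - h) = h)%N by lia.
by rewrite univ_in_var_affine.
Qed.

Lemma affine_roABP_suffix h : (h <= n)%N ->
  \big[@mulmx _ K K K/1%:M]_(j <- iota (n - h) h)
     map_mx (univ_in_var (pi (inord j))) (affine_layer (inord j)) =
  \sum_(i <- iota 0 (2 ^ h)) mx_monomial (level_mono h i) (word_prod G h i).
Proof.
elim: h => [|h IH] hn.
  rewrite big_nil expn0 big_cons big_nil addr0; apply/matrixP => i j.
  by rewrite !mxE mpolyX0; case: (i == j); rewrite ?mulr1n ?mulr0n ?scale1r ?scale0r.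
have -> : iota (n - h.+1) h.+1 = (n' - h)%N :: iota (n - h) h.
  by rewrite /=; congr (_ :: iota _ _); lia.
rewrite big_cons IH ?(ltnW hn) // affine_layer_level; last by lia.
rewrite mulmxDl !mulmx_sumr expnS mul2n -addnn iotaD big_cat /= add0n; congr (_ + _).
  apply: eq_big_seq => i; rewrite mem_iota /= add0n => lti.
  by rewrite mx_monomialM add0m /gen_cat /= lti.
have -> : iota (2 ^ h) (2 ^ h) = map (addn (2 ^ h)) (iota 0 (2 ^ h)).
  by rewrite -iotaDl addn0.
rewrite big_map; apply: eq_bigr => i _.
by rewrite mx_monomialM /= /gen_cat ltnNge leq_addr /= addKn addmC.
Qed.

Lemma affine_roABPE i0 :
  affine_roABP i0 = \sum_(i <- iota 0 (2 ^ n)) word_prod G n i i0 i0 *: 'X_[level_mono n i].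
Proof.
have := affine_roABP_suffix (leqnn n); rewrite subnn -[iota 0 n]/(index_iota 0 n) big_mkord.
under eq_bigr => j _ do rewrite inord_val.
by rewrite /affine_roABP /roABP_mx => ->; rewrite summxE; apply: eq_bigr => i _; rewrite mxE.
Qed.

Lemma level_var_inj h1 h2 : (h1 <= n')%N -> (h2 <= n')%N ->
  level_var h1 = level_var h2 -> h1 = h2.
Proof. by move=> l1 l2 /perm_inj /(congr1 (@nat_of_ord _)); rewrite !inordK; lia. Qed.

Lemma level_mono_above h i h' : (h <= h')%N -> (h' <= n')%N ->
  level_mono h i (level_var h') = 0%N.
Proof.
elim: h i => [|h IH] i hh hn /=; first by rewrite mnm0E.
case: ifP => _; first by apply: IH => //; lia.
rewrite mnmDE IH ?mnm1E; [|lia|lia].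
by case: eqP => [/level_var_inj E|//]; have := E ltac:(lia) hn; lia.
Qed.

Lemma level_mono_le1 h i v : (h <= n)%N -> (level_mono h i v <= 1)%N.
Proof.
elim: h i => [|h IH] i hn /=; first by rewrite mnm0E.
case: ifP => _; first by apply: IH; lia.
rewrite mnmDE mnm1E; case: eqP => [<-|_]; last by rewrite addn0 IH //; lia.
by rewrite level_mono_above //; lia.
Qed.

Lemma level_mono_inj h i i' : (h <= n)%N -> (i < 2 ^ h)%N -> (i' < 2 ^ h)%N ->
  level_mono h i = level_mono h i' -> i = i'.
Proof.
elim: h i i' => [|h IH] i i' hn; first by rewrite expn0; lia.
rewrite expnS => lti lti' /= E.
have := congr1 (fun m : 'X_{1..n} => m (level_var h)) E; move: E => /=.
case: ifP => ci; case: ifP => ci'; rewrite ?mnmDE ?level_mono_above ?mnm1E ?eqxx //; try lia.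
- by move=> E _; apply: IH => //; lia.
move=> E _; suff : (i - 2 ^ h)%N = (i' - 2 ^ h)%N by lia.
apply: IH; [lia|lia|lia|]; apply/mnmP => v.
by have := congr1 (fun m : 'X_{1..n} => m v) E; rewrite !mnmDE => /addIn.
Qed.

Lemma level_mono_bits h i v : (h <= n)%N -> (i < 2 ^ h)%N ->
  level_mono h i v = (\sum_(l < h) (v == level_var l) * bit l i)%N.
Proof.
elim: h i => [|h IH] i hn lti /=; first by rewrite mnm0E big_ord0.
rewrite big_ord_recr /=; case: ifP => ci.
  by rewrite IH ?bit_small ?muln0 ?addn0 //; lia.
move: lti; rewrite expnS => lti.
have -> : i = (2 ^ h + (i - 2 ^ h))%N by lia.
rewrite addKn mnmDE IH ?bit_addX ?mnm1E; [|lia|lia|lia].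
by rewrite eq_sym muln1; congr (_ + _)%N; apply: eq_bigr => l _; rewrite bit_addX_low.
Qed.

Lemma mcoeff_affine_roABP i0 r : (r < 2 ^ n)%N ->
  (affine_roABP i0)@_(level_mono n r) = word_prod G n r i0 i0.
Proof.
move=> ltr; rewrite affine_roABPE (big_morph _ (mcoeffD _) (mcoeff0 _ _)).
rewrite (bigD1_seq r) ?iota_uniq ?mem_iota //= mcoeffZ mcoeffX eqxx mulr1.
rewrite big_seq_cond big1 ?addr0 // => i /andP [iin ni].
rewrite mcoeffZ mcoeffX; case: eqP => [E|]; last by rewrite mulr0.
move: iin; rewrite mem_iota add0n => /andP [_ lti].
by move: ni; rewrite (level_mono_inj (leqnn _) lti ltr E) eqxx.
Qed.

Lemma affine_roABP_multilinear i0 : multilinear (affine_roABP i0).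
Proof.
move=> m; rewrite affine_roABPE => /msupp_sum_le /flattenP [ms /mapP [i _ ->]].
by move/msuppZ_le; rewrite msuppX inE => /eqP -> v; apply: level_mono_le1.
Qed.

Lemma affine_roABP_computes (i0 : 'I_K) :
  val i0 = 0%N -> roABP_computes K (fun _ => True) (affine_roABP i0).
Proof. by exists pi, affine_layer, i0. Qed.

Lemma level_var_rev (l : 'I_n) : level_var (n' - l) = pi l.
Proof. by rewrite /level_var subKn ?inord_val // -ltnS. Qed.

Lemma level_mono_top r v : (r < 2 ^ n)%N ->
  level_mono n r v = bit (n' - (pi^-1)%g v) r.
Proof.
move=> ltr; rewrite level_mono_bits // (reindex_inj rev_ord_inj) /=.
rewrite (bigD1 ((pi^-1)%g v)) //= big1 => [|l nl].
  by rewrite subSS level_var_rev permKV eqxx mul1n addn0.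
rewrite subSS level_var_rev; case: eqP => [vE|]; last by rewrite mul0n.
by move: nl; rewrite vE permK eqxx.
Qed.

Lemma bit_lex_index r (v : 'I_n) : bit v (lex_index pi r) = bit (n' - (pi^-1)%g v) r.
Proof.
rewrite /lex_index (reindex_inj (@perm_inj _ (pi^-1)%g)) /=.
pose a (l : nat) := bit (n' - (pi^-1)%g (inord l)) r.
rewrite (eq_bigr (fun l : 'I_n => a l * 2 ^ l)%N) => [|l _]; last first.
  by rewrite permKV /a inord_val subn1.
by rewrite bit_sum // /a inord_val.
Qed.

Lemma level_mono_lex r : (r < 2 ^ n)%N ->
  level_mono n r = mono_of_index n (lex_index pi r).
Proof. by move=> ltr; apply/mnmP => v; rewrite level_mono_top // mnmE -bit_lex_index. Qed.

End AffineRoABP.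

Lemma ltn_sqr_mulr x y : (1 < x)%N -> (0 < y)%N -> (x < (x * y) ^ 2)%N.
Proof.
move=> x_gt1 y_gt0; have xy : (x <= x * y)%N by rewrite leq_pmulr.
by rewrite -mulnn; apply: leq_trans (leq_mul xy xy); apply: ltn_Pmulr (ltnW x_gt1).
Qed.

Lemma uniq_powers (R : fieldType) (a : R) k :
  mult_order_ge a k -> uniq [seq a ^+ i | i <- iota 0 k].
Proof.
case=> an0 ord_a; have neq i j : (i < j < k)%N -> a ^+ i != a ^+ j.
  case/andP=> lt ltj; have /ord_a : (0 < j - i < k)%N by lia.
  apply: contra => /eqP E; apply/eqP/(mulfI (expf_neq0 i an0)).
  by rewrite -exprD subnKC ?(ltnW lt) // mulr1.
rewrite map_inj_in_uniq ?iota_uniq // => i j; rewrite !mem_iota !add0n.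
move=> /andP [_ ltik] /andP [_ ltjk] /eqP; case: (ltngtP i j) => // lt.
  by rewrite (negPf (neq i j _)) //; apply/andP.
by rewrite eq_sym (negPf (neq j i _)) //; apply/andP.
Qed.

Lemma meval_roABP_block (R : fieldType) h w d (sigma : 'S_(2 ^ h))
    (M : 'I_(2 ^ h) -> 'M[{poly R}]_w) (j0 : 'I_(2 ^ h)) (i0 : 'I_w) x :
  indiv_deg_le d (roABP_mx sigma M i0 i0) ->
  (roABP_mx sigma M i0 i0).@[x] =
  block (fun r => map_mx (take_poly d.+1) (M (insubd j0 r))) h 0
        (fun i => x (sigma (insubd j0 i))) i0 i0.
Proof.
move=> Mdeg; rewrite (roABP_mx_take_poly Mdeg) meval_roABP_mx blockE mul0n.
have -> : iota 0 (2 ^ h) = index_iota 0 (2 ^ h) by rewrite /index_iota subn0.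
rewrite big_mkord; congr (fun_of_matrix _ i0 i0).
by apply: eq_bigr => i _; rewrite add0n /layer valKd.
Qed.

Definition top_weight (R : fieldType) K (L : 'M[R]_K) (G : nat -> 'M[R]_K * 'M[R]_K) h :=
  fun j => if j == h then (L *m (G j).1, L *m (G j).2) else G j.

Lemma word_prod_top_weight (R : fieldType) K (L : 'M[R]_K) G h i :
  word_prod (top_weight L G h) h.+1 i = L *m word_prod G h.+1 i.
Proof.
rewrite /= /top_weight eqxx (@eq_word_prod _ _ _ G) => [|j ltj]; last by rewrite (ltn_eqF ltj).
by rewrite /gen_cat; case: ifP; rewrite mulmxA.
Qed.

(* Weighting the first layer by e_i0 beta^T makes the (i0, i0) entry read
   beta^T P e_i0. *)
Lemma coeff_vec_affine_roABP (R : fieldType) n' K (pi : 'S_n'.+1) (sigma : 'S_(2 ^ n'.+1))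
    (G : nat -> 'M[R]_K * 'M[R]_K) (i0 : 'I_K) (beta : 'cV[R]_K) (r : 'I_(2 ^ n'.+1)) :
  val (sigma r) = lex_index pi r ->
  coeff_vec (affine_roABP pi (top_weight (delta_mx i0 0 *m beta^T) G n') i0) (sigma r) =
  gen_input (fun i => word_prod G n'.+1 i *m delta_mx i0 0) beta r.
Proof.
move=> sr; rewrite /coeff_vec sr -level_mono_lex // mcoeff_affine_roABP //.
rewrite word_prod_top_weight /gen_input mulmxA -colE -mulmxA [RHS]mxE.
by rewrite mxE big_ord1 mxE !eqxx mul1r.
Qed.

Theorem theorem1p10 (R : fieldType) (n w d : nat) :
  (1 <= n)%N -> (1 <= w)%N -> (1 <= d)%N ->
  (exists a : R, mult_order_ge a ((2 ^ n * d * w ^ 2) ^ 2)) ->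
  (exists s : seq R, uniq s /\ (w ^ 2 <= size s)%N) ->
  forall F : {mpoly R[2 ^ n]},
    F != 0 ->
    indiv_deg_le d F ->
    roABP_computes w (@monomial_compatible n) F ->
    exists f : {mpoly R[n]},
      multilinear f /\
      roABP_computes (w ^ 2) (fun _ => True) f /\
      F.@[coeff_vec f] != 0.
Proof.
case: n => [//|n'] _ w_gt0 d_gt0 [a /uniq_powers uniq_s] _ F Fn0 Fdeg.
case=> sigma [M [iw [[pi sigmaE] [_ FE]]]].
set N := (2 ^ n'.+1)%N; set s := [seq _ | _ <- _] in uniq_s.
have w2_gt0 : (0 < w ^ 2)%N by rewrite expn_gt0 w_gt0.
have N_ge2 : (2 <= N)%N by rewrite -{1}(expn1 2) leq_exp2l.
have Nd_lt_s : (N * d < size s)%N.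
  by rewrite size_map size_iota ltn_sqr_mulr // (leq_trans N_ge2) ?leq_pmulr.
pose j0 : 'I_N := Ordinal (ltnW N_ge2); pose i0 : 'I_(w ^ 2) := Ordinal w2_gt0.
have size_T r a' b' : (size (map_mx (take_poly d.+1) (M (insubd j0 r)) a' b') <= d.+1)%N.
  by rewrite mxE size_take_poly.
have [G span] := spanning_word_prod size_T i0 uniq_s Nd_lt_s (eq_leq (mulnn w)).
have Fx x : F.@[x] = block (fun r => map_mx (take_poly d.+1) (M (insubd j0 r))) n'.+1 0
                        (fun i => x (sigma (insubd j0 i))) iw iw.
  by rewrite FE; apply: meval_roABP_block; rewrite -FE.
pose f (beta : 'cV[R]_(w ^ 2)) := affine_roABP pi (top_weight (delta_mx i0 0 *m beta^T) G n') i0.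
suff [beta Fb] : exists beta, F.@[coeff_vec (f beta)] != 0.
  exists (f beta); split; first exact: affine_roABP_multilinear.
  by split=> //; exact: affine_roABP_computes.
apply: NNPP => Hno; move/eqP: Fn0; apply; apply: (mpoly_eq0_of_meval uniq_s _ Fdeg) => [|x].
  by apply: leq_ltn_trans Nd_lt_s; rewrite leq_pmull ?expn_gt0.
rewrite Fx; apply: (spanning_entry span) => beta.
rewrite (@eq_block _ _ _ _ _ _ (fun i => coeff_vec (f beta) (sigma (insubd j0 i)))).
  by rewrite -Fx; apply: NNPP => Fb; apply: Hno; exists beta; apply/eqP.
by move=> i lti; rewrite coeff_vec_affine_roABP ?sigmaE // insubdK.
Qed.
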